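(* For all integers $k\geq 2$ and $w\geq 2$, there exists a finite poset $P$ of width $w$ that does not contain $\mathbf{k}+\mathbf{k}$ as an induced subposet, and an ordering of the elements of $P$ such that First-Fit, presented with the elements in this order, uses at least $(k-1)(w-1)$ chains.
   Context: The width of a poset is the maximum size of an antichain. $\mathbf{k}+\mathbf{k}$ denotes the poset consisting of two disjoint chains $A,B$ with $|A|=|B|=k$ in which every element of $A$ is incomparable with every element of $B$. The First-Fit algorithm receives the elements of $P$ one at a time in some order and puts each new element $v$ into the first chain of the current chain partition all of whose elements are comparable to $v$, opening a new chain at the end of the partition if there is none. *)

From mathcomp Require Import all_boot.
Set Implicit Arguments. Unset Strict Implicit. Unset Printing Implicit Defensive.

Section Posets.
Variable T : finType.
Variable le : rel T.

Definition is_poset : Prop :=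
  reflexive le /\ antisymmetric le /\ transitive le.

Definition comparable (x y : T) : bool := le x y || le y x.

Definition is_chain (A : {set T}) : bool :=
  [forall x in A, forall y in A, comparable x y].

Definition is_antichain (A : {set T}) : bool :=
  [forall x in A, forall y in A, (x != y) ==> ~~ comparable x y].

Definition width : nat := \max_(A : {set T} | is_antichain A) #|A|.

(* P contains k+k as an induced subposet: two k-element chains A, B
   with every element of A incomparable to every element of B
   (this forces A and B to be disjoint). *)
Definition contains_kk (k : nat) : Prop :=
  exists A B : {set T},
    [/\ #|A| = k, #|B| = k, is_chain A, is_chain B &
        forall a b, a \in A -> b \in B -> ~~ comparable a b].

Fixpoint ff_insert (C : seq (seq T)) (v : T) : seq (seq T) :=
  match C with
  | [::] => [:: [:: v]]
  | c :: C' => if all (comparable v) c then (rcons c v) :: C'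
               else c :: ff_insert C' v
  end.

Definition first_fit (s : seq T) : seq (seq T) := foldl ff_insert [::] s.

Definition ff_num_chains (s : seq T) : nat := size (first_fit s).

End Posets.

From Pilot Require Import Defs.
From mathcomp Require Import all_boot zify.
Set Implicit Arguments. Unset Strict Implicit. Unset Printing Implicit Defensive.

(* Lay out d*d*w points on d*d levels and w columns, and let x <= y when x and y
   share a column and x is not higher, or when y is at least d = k - 1 levels
   higher.  An antichain meets each column at most once, so the width is w; a
   chain has at most one point per level, and everything incomparable to a
   lowest point z of a putative k + k lies fewer than d levels above z, so there
   is no k + k.  For each start level b < d and column a, the "diagonal" chain
   climbing d levels and one column at a time from (b, a) is blocked, point by
   point, by every diagonal presented before it, so First-Fit, fed these d*w
   diagonals in order, opens a new chain for each of them. *)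

Lemma card_le_window (T : finType) (A : {set T}) (f : T -> nat) p m :
  {in A &, injective f} -> {in A, forall x, p <= f x < p + m} -> #|A| <= m.
Proof.
move=> f_inj f_win; rewrite cardE -(size_map f) -[m](size_iota p).
apply: uniq_leq_size.
  rewrite map_inj_in_uniq ?enum_uniq // => x y; rewrite !mem_enum; exact: f_inj.
by move=> y /mapP [x]; rewrite mem_enum => /f_win fx_win ->; rewrite mem_iota.
Qed.

Section FirstFit.
Variables (T : finType) (le : rel T).

Definition chain_seq (c : seq T) : bool := all2rel (Defs.comparable le) c.

Definition blocks (c c' : seq T) : bool :=
  all (fun x => ~~ all (Defs.comparable le x) c) c'.

Lemma ff_insert_cat S R v : all (fun c => ~~ all (Defs.comparable le v) c) S ->
  ff_insert le (S ++ R) v = S ++ ff_insert le R v.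
Proof. by elim: S => //= c S IH /andP [/negbTE -> /IH ->]. Qed.

Lemma foldl_ff_insert_chain S c : c != [::] -> chain_seq c ->
  all (blocks^~ c) S -> foldl (ff_insert le) S c = rcons S c.
Proof.
move=> c_nil /allrelP c_chain /allP S_blocks.
have skip x : x \in c -> all (fun c' => ~~ all (Defs.comparable le x) c') S.
  by move=> xc; apply/allP => c' /S_blocks /allP; apply.
have grow x p q : {subset x :: p ++ q <= c} ->
    foldl (ff_insert le) (rcons S (x :: p)) q = rcons S (x :: p ++ q).
  elim: q p => [|y q IH] p sub_c /=; first by rewrite cats0.
  have yc : y \in c by apply: sub_c; rewrite inE mem_cat mem_head !orbT.
  have /= y_fits : all (Defs.comparable le y) (x :: p).
    apply/allP => z zp; apply: c_chain => //; apply: sub_c.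
    by rewrite -cat_cons mem_cat zp.
  rewrite -cats1 ff_insert_cat ?skip //= y_fits cats1 -rcons_cons IH ?cat_rcons //.
case: c c_nil skip grow {c_chain S_blocks} => [|x q] // _ skip grow /=.
rewrite -[S]cats0 ff_insert_cat ?skip ?mem_head //= cats0 cats1.
by apply: (grow x [::] q).
Qed.

Lemma foldl_ff_insert_flatten S cs :
  all (fun c => c != [::]) cs -> all chain_seq cs ->
  pairwise blocks cs -> allrel blocks S cs ->
  foldl (ff_insert le) S (flatten cs) = S ++ cs.
Proof.
elim: cs S => [|c cs IH] S /=; first by rewrite cats0.
move=> /andP [c_nil cs_nil] /andP [c_chain cs_chain] /andP [c_blocks cs_pw].
rewrite allrel_consr => /andP [S_blocks S_cs].
rewrite -/(flatten cs) foldl_cat (foldl_ff_insert_chain c_nil c_chain S_blocks).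
rewrite IH ?cat_rcons //.
by rewrite -cats1 allrel_catl S_cs allrel1l.
Qed.

Lemma first_fit_flatten cs :
  all (fun c => c != [::]) cs -> all chain_seq cs ->
  pairwise blocks cs -> first_fit le (flatten cs) = cs.
Proof. by move=> *; apply: foldl_ff_insert_flatten; rewrite ?allrel0l. Qed.

Lemma uniq_flatten_blocks cs : all chain_seq cs -> all uniq cs ->
  pairwise blocks cs -> uniq (flatten cs).
Proof.
elim: cs => //= c cs IH /andP [/allrelP c_chain cs_chain] /andP [c_uniq cs_uniq].
move=> /andP [/allP c_blocks cs_pw]; rewrite cat_uniq c_uniq IH // andbT.
apply/hasPn => x /flattenP [c' /c_blocks /allP x_blocked xc']; apply/negP => xc.
by have /negP := x_blocked x xc'; apply; apply/allP => y; apply: c_chain.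
Qed.

Lemma size_first_fit_cat s t :
  size (first_fit le s) <= size (first_fit le (s ++ t)).
Proof.
rewrite /first_fit foldl_cat; elim: t (foldl _ _ s) => //= v t IH S.
apply: leq_trans (IH _); elim: S => //= c S IHS.
by case: ifP => //=; rewrite ltnS.
Qed.

Lemma first_fit_order_of_chains cs :
  all (fun c => c != [::]) cs -> all chain_seq cs -> all uniq cs ->
  pairwise blocks cs ->
  exists s, perm_eq s (enum T) /\ size cs <= ff_num_chains le s.
Proof.
move=> cs_nil cs_chain cs_uniq cs_pw; set L := flatten cs.
exists (L ++ [seq x <- enum T | x \notin L]); split.
  apply: uniq_perm.
  - rewrite cat_uniq uniq_flatten_blocks ?filter_uniq -?enumT ?enum_uniq ?andbT //=.
    by apply/hasPn => x; rewrite mem_filter => /andP [].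
  - exact: enum_uniq.
  - by move=> x; rewrite mem_cat mem_filter mem_enum andbT orbN.
rewrite /ff_num_chains; apply: leq_trans (size_first_fit_cat _ _).
by rewrite first_fit_flatten.
Qed.

End FirstFit.

Section Grid.
Variables (w d : nat).
Hypotheses (w_gt1 : 1 < w) (d_gt0 : 0 < d).

Local Notation n := (d * d * w).
Local Notation level x := (x %/ w).
Local Notation column x := (x %% w).

Let w_gt0 : 0 < w. Proof. exact: ltnW. Qed.

Lemma level_code p r : r < w -> level (p * w + r) = p.
Proof. by move=> r_lt; rewrite divnMDl // divn_small // addn0. Qed.

Lemma column_code p r : r < w -> column (p * w + r) = r.
Proof. by move=> r_lt; rewrite modnMDl modn_small. Qed.

Lemma ord_eq_level_column (x y : 'I_n) :
  level x = level y -> column x = column y -> x = y.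
Proof.
by move=> eq_l eq_c; apply: val_inj; rewrite /= (divn_eq x w) eq_l eq_c -divn_eq.
Qed.

Definition grid_le : rel 'I_n := fun x y =>
  (column x == column y) && (level x <= level y) || (level x + d <= level y).

Lemma grid_le_poset : is_poset grid_le.
Proof.
split; [|split].
- by move=> x; rewrite /grid_le eqxx leqnn.
- move=> x y /andP [].
  rewrite /grid_le => /orP [/andP [/eqP eq_c le_xy] | ?] /orP [/andP [_ le_yx] | ?];
    try by exfalso; lia.
  by apply: ord_eq_level_column => //; apply/eqP; rewrite eqn_leq le_xy le_yx.
- move=> y x z; rewrite /grid_le.
  case/orP => [/andP [/eqP c_xy le_xy] | ?] /orP [/andP [/eqP c_yz le_yz] | ?];
    apply/orP; [left; rewrite c_xy c_yz eqxx; lia | right; lia ..].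
Qed.

Lemma grid_comparable_far (x y : 'I_n) :
  level x + d <= level y -> Defs.comparable grid_le x y.
Proof. by move=> far; rewrite /Defs.comparable /grid_le far orbT. Qed.

Lemma grid_incomparable (x y : 'I_n) : column x != column y ->
  level x < level y + d -> level y < level x + d -> ~~ Defs.comparable grid_le x y.
Proof.
move=> c_xy l_xy l_yx; rewrite /Defs.comparable /grid_le (negbTE c_xy).
by rewrite eq_sym (negbTE c_xy) /= negb_or -!ltnNge l_xy l_yx.
Qed.

Lemma grid_comparable_same_level (x y : 'I_n) :
  level x = level y -> Defs.comparable grid_le x y -> x = y.
Proof.
have not_far l : (l + d <= l) = false by lia.
move=> l_xy; rewrite /Defs.comparable /grid_le l_xy leqnn !not_far !orbF !andbT.
by case/orP => /eqP c_xy; apply: ord_eq_level_column => //; apply/esym.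
Qed.

Lemma grid_antichain_card (A : {set 'I_n}) : is_antichain grid_le A -> #|A| <= w.
Proof.
move=> /forall_inP antiA; apply: (@card_le_window _ _ (fun x : 'I_n => column x) 0).
  move=> x y xA yA c_xy; apply/eqP; apply: contraT => x_neq_y.
  have /forall_inP /(_ y yA) := antiA x xA; rewrite x_neq_y /=.
  suff -> : Defs.comparable grid_le x y by [].
  rewrite /Defs.comparable /grid_le c_xy eqxx /=.
  by case/orP: (leq_total (level x) (level y)) => ->; rewrite ?orbT.
by move=> x _; rewrite ltn_mod w_gt0.
Qed.

Lemma grid_width : width grid_le = w.
Proof.
apply/eqP; rewrite eqn_leq; apply/andP; split.
  by apply/bigmax_leqP => A; apply: grid_antichain_card.
have w_le_n : w <= n by rewrite leq_pmull // muln_gt0 d_gt0.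
pose A := [set widen_ord w_le_n i | i in 'I_w].
have cardA : #|A| = w.
  by rewrite card_imset ?card_ord // => i j /(congr1 val) /= /ord_inj.
have antiA : is_antichain grid_le A.
  apply/forall_inP => _ /imsetP [i _ ->]; apply/forall_inP => _ /imsetP [j _ ->].
  apply/implyP => i_neq_j.
  by apply: grid_incomparable; rewrite /= ?divn_small ?modn_small.
by rewrite -{1}cardA; apply: (leq_bigmax_cond _ antiA).
Qed.

Lemma grid_chain_card (B : {set 'I_n}) p : is_chain grid_le B ->
  {in B, forall b : 'I_n, p <= level b < p + d} -> #|B| <= d.
Proof.
move=> /forall_inP chainB B_win; apply: card_le_window B_win => x y xB yB l_xy.
by apply: grid_comparable_same_level l_xy _; have /forall_inP := chainB x xB; apply.
Qed.

Lemma grid_kk_free : ~ contains_kk grid_le d.+1.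
Proof.
move=> [A [B [cardA cardB chainA chainB incompAB]]].
have [a0 a0A] : exists a0, a0 \in A by apply/card_gt0P; rewrite cardA.
have a0AB : a0 \in A :|: B by rewrite in_setU a0A.
have [z zAB z_min] := arg_minnP (fun x : 'I_n => level x) a0AB.
have window (C : {set 'I_n}) : is_chain grid_le C -> #|C| = d.+1 ->
    C \subset A :|: B -> {in C, forall c, ~~ Defs.comparable grid_le z c} -> False.
  move=> chainC cardC subC incompC.
  suff : #|C| <= d by rewrite cardC ltnn.
  apply: (grid_chain_card (p := level z) chainC) => c cC.
  rewrite z_min /=; last exact: (subsetP subC).
  rewrite ltnNge; apply: contra (incompC c cC); exact: grid_comparable_far.
case/setUP: zAB => [zA | zB].
- by apply: (window B) => // [|b bB]; [exact: subsetUr | exact: incompAB].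
- apply: (window A) => // [|a aA]; first exact: subsetUl.
  by rewrite /Defs.comparable orbC; apply: incompAB.
Qed.

Lemma code_lt_n p r : p < d * d -> r < w -> p * w + r < n.
Proof.
move=> p_lt r_lt; have : p.+1 * w <= d * d * w by rewrite leq_mul2r p_lt orbT.
rewrite mulSn; lia.
Qed.

Definition diag_chain b a : seq 'I_n :=
  pmap insub [seq (b + h * d) * w + (a + h) %% w | h <- iota 0 (d - b)].

Lemma mem_diag_chain b a (x : 'I_n) : x \in diag_chain b a ->
  exists2 h, h < d - b & level x = b + h * d /\ column x = (a + h) %% w.
Proof.
rewrite mem_pmap_sub => /mapP [h]; rewrite mem_iota => /= h_lt ->.
by exists h => //; rewrite level_code ?column_code ?ltn_mod.
Qed.

Lemma diag_chain_point b a h : h < d - b ->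
  exists2 x, x \in diag_chain b a & level x = b + h * d /\ column x = (a + h) %% w.
Proof.
move=> h_lt; have r_lt : (a + h) %% w < w by rewrite ltn_mod.
have x_lt : (b + h * d) * w + (a + h) %% w < n.
  apply: code_lt_n r_lt; have : h.+1 * d <= (d - b) * d by rewrite leq_mul2r h_lt orbT.
  rewrite mulSn mulnBl; nia.
exists (Ordinal x_lt); last by rewrite /= level_code ?column_code.
by rewrite mem_pmap_sub; apply/mapP; exists h; rewrite ?mem_iota.
Qed.

Lemma diag_chain_uniq b a : uniq (diag_chain b a).
Proof.
apply: pmap_sub_uniq; rewrite map_inj_in_uniq ?iota_uniq // => h1 h2 _ _.
move=> /(congr1 (fun x => level x)).
rewrite !level_code ?ltn_mod // => /addnI /eqP.
by rewrite eqn_mul2r eqn0Ngt d_gt0 => /eqP.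
Qed.

Lemma diag_chain_chain b a : chain_seq grid_le (diag_chain b a).
Proof.
apply/allrelP => x y /mem_diag_chain [hx _ [l_x c_x]] /mem_diag_chain [hy _ [l_y c_y]].
case: (ltngtP hx hy) => [hx_lt | hy_lt | eq_h].
- by apply: grid_comparable_far; rewrite l_x l_y; nia.
- by rewrite /Defs.comparable orbC; apply: grid_comparable_far; rewrite l_x l_y; nia.
- by rewrite /Defs.comparable /grid_le l_x l_y c_x c_y eq_h eqxx leqnn.
Qed.

Lemma diag_chain_nil b a : b < d -> diag_chain b a != [::].
Proof.
move=> b_lt; have [|x x_in _] := @diag_chain_point b a 0; first by rewrite subn_gt0.
by apply: contraTneq x_in => ->.
Qed.

(* The point at step h of the diagonal (bj, aj) is incomparable to the point of
   the diagonal (bi, ai) at step h + 1 if ai = aj (so that bi < bj), and at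
   step h otherwise: it lies fewer than d levels away, in another column. *)
Lemma diag_chain_blocks bi ai bj aj : bi <= bj -> bj < d -> ai < w -> aj < w ->
  (ai = aj -> bi < bj) -> blocks grid_le (diag_chain bi ai) (diag_chain bj aj).
Proof.
move=> le_b bj_lt ai_lt aj_lt eq_a; apply/allP => x /mem_diag_chain [h h_lt [l_x c_x]].
have [eq_ai | neq_ai] := eqVneq ai aj.
- have [|y y_in [l_y c_y]] := @diag_chain_point bi ai h.+1.
    by have := eq_a eq_ai; lia.
  apply/allPn; exists y => //; apply: grid_incomparable; rewrite ?l_x ?l_y.
  + by rewrite c_x c_y eq_ai -addn1 addnA -{1}[aj + h]addn0 eqn_modDl mod0n modn_small.
  + by have := eq_a eq_ai; rewrite mulSn; lia.
  + by rewrite mulSn; lia.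
- have [|y y_in [l_y c_y]] := @diag_chain_point bi ai h; first lia.
  apply/allPn; exists y => //; apply: grid_incomparable; rewrite ?l_x ?l_y.
  + by rewrite c_x c_y eqn_modDr !modn_small // eq_sym.
  + lia.
  + lia.
Qed.

Definition diag_chains : seq (seq 'I_n) :=
  [seq diag_chain (j %/ w) (j %% w) | j <- iota 0 (d * w)].

Lemma diag_chains_pairwise : pairwise (blocks grid_le) diag_chains.
Proof.
rewrite pairwise_map; apply: (@sub_in_pairwise _ (gtn (d * w)) ltn).
- move=> i j /= i_lt j_lt lt_ij; apply: diag_chain_blocks.
  + exact/leq_div2r/ltnW.
  + by rewrite ltn_divLR.
  + by rewrite ltn_mod.
  + by rewrite ltn_mod.
  + move=> eq_mod; rewrite ltn_neqAle (leq_div2r _ (ltnW lt_ij)) andbT.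
    apply: contraTneq lt_ij => eq_div.
    by rewrite (divn_eq i w) (divn_eq j w) eq_div eq_mod ltnn.
- by apply/allP => j; rewrite mem_iota.
- by rewrite -(sorted_pairwise ltn_trans) iota_ltn_sorted.
Qed.

Lemma grid_first_fit_order :
  exists s, perm_eq s (enum 'I_n) /\ d * w <= ff_num_chains grid_le s.
Proof.
have in_chains (P : pred (seq 'I_n)) :
    (forall b a, b < d -> P (diag_chain b a)) -> all P diag_chains.
  move=> P_diag; apply/allP => c /mapP [j]; rewrite mem_iota => /= j_lt ->.
  by apply: P_diag; rewrite ltn_divLR.
have [|||s [perm_s size_s]] := first_fit_order_of_chains _ _ _ diag_chains_pairwise.
- by apply: in_chains => b a; apply: diag_chain_nil.
- by apply: in_chains => b a _; apply: diag_chain_chain.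
- by apply: in_chains => b a _; apply: diag_chain_uniq.
by exists s; rewrite size_map size_iota in size_s.
Qed.

End Grid.

Theorem theorem6 (k w : nat) (hk : 2 <= k) (hw : 2 <= w) :
  exists (n : nat) (le : rel 'I_n),
    [/\ is_poset le,
        width le = w,
        ~ contains_kk le k &
        exists s : seq 'I_n,
          perm_eq s (enum 'I_n) /\ (k - 1) * (w - 1) <= ff_num_chains le s].
Proof.
have d_gt0 : 0 < k - 1 by rewrite subn_gt0.
have kE : k = (k - 1).+1 by rewrite subn1 prednK // ltnW.
exists ((k - 1) * (k - 1) * w), (@grid_le w (k - 1)); split.
- exact: grid_le_poset.
- exact: grid_width.
- by rewrite [X in contains_kk _ X]kE; apply: grid_kk_free.
- have [s [perm_s size_s]] := grid_first_fit_order hw d_gt0.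
  by exists s; split => //; apply: leq_trans size_s; rewrite leq_mul2l leq_subr orbT.
Qed.
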